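(* Fix constants $B>0$, $1\le\Gamma\le 3$, $0<\kappa\le 1$, and fixed Riemann data $\varrho_l>0$, $\varrho_r>0$, $\upsilon_l,\upsilon_r\ge 0$ with $\upsilon_r\le \upsilon_l-\frac{B}{\varrho_l^{\kappa}}$. For parameters $a>0$, $A>0$ (with $a<1/\max(\varrho_l,\varrho_r)$), let $p(\varrho)=A\left(\frac{\varrho}{1-a\varrho}\right)^{\Gamma}-\frac{B}{\varrho^{\kappa}}$, $p_l=p(\varrho_l)$, and let $\varrho_*=\varrho_*(a,A)\in(\varrho_l,1/a)$ be the intermediate density determined by $\upsilon_r=-p(\varrho_* )+\upsilon_l+p_l$. Then $\lim_{a,A\to 0}\varrho_*=+\infty$.
   Context: This concerns the Aw–Rascle type system $\varrho_t+(\varrho\upsilon)_x=0$, $(\varrho(\upsilon+p))_t+(\varrho\upsilon(\upsilon+p))_x=0$ with the pressure $p$ above, and Riemann initial data $(\varrho,\upsilon)(x,0)=(\varrho_l,\upsilon_l)$ for $x<0$, $(\varrho_r,\upsilon_r)$ for $x>0$. When $\upsilon_r<\upsilon_l$, the Riemann solution consists of a 1-shock $S$ from $(\varrho_l,\upsilon_l)$ to an intermediate state $(\varrho_*,\upsilon_* )$ with $\varrho_*>\varrho_l$ and $\upsilon_*+p(\varrho_* )=\upsilon_l+p_l$, followed by a contact discontinuity $J$ from $(\varrho_*,\upsilon_* )$ to $(\varrho_r,\upsilon_r)$ with $\upsilon_*=\upsilon_r$. The limit $a,A\to0$ is taken with $B,\Gamma,\kappa$ and the Riemann data fixed. *)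

From Stdlib Require Import Reals.
Open Scope R_scope.

Definition pres (a A B Gam kap rho : R) : R :=
  A * Rpower (rho / (1 - a * rho)) Gam - B / Rpower rho kap.

(* The Riemann data force the pressure at the intermediate state to be
   positive: [p(rs) = p(rl) + (ul - ur) >= p(rl) + B/rl^kap = A (rl/(1-a rl))^Gam > 0].
   On a bounded range [rho <= N] with [a <= 1/(2N)] the compressibility factor
   [rho/(1-a rho)] stays below [2N], so once [A] is small the attractive part
   [B/rho^kap >= B/N^kap] dominates and [p(rho) <= 0].  Hence [rs > N]. *)

From Stdlib Require Import Reals Lra.
Open Scope R_scope.

Lemma Rpower_pos (x y : R) : 0 < Rpower x y.
Proof. apply exp_pos. Qed.

Lemma pres_add_attraction_pos (a A B Gam kap rho : R) :
  0 < A -> 0 < pres a A B Gam kap rho + B / Rpower rho kap.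
Proof.
  intros HA; unfold pres.
  pose proof (Rpower_pos (rho / (1 - a * rho)) Gam); nra.
Qed.

Lemma pres_pos_of_riemann_data (a A B Gam kap rl rs ul ur : R) :
  0 < A ->
  ur <= ul - B / Rpower rl kap ->
  ur = - pres a A B Gam kap rs + ul + pres a A B Gam kap rl ->
  0 < pres a A B Gam kap rs.
Proof.
  intros HA Hdata Heq.
  pose proof (pres_add_attraction_pos a A B Gam kap rl HA); lra.
Qed.

Lemma compression_le_double (a rho N : R) :
  0 < rho <= N -> 0 <= a -> a * N <= 1 / 2 -> rho / (1 - a * rho) <= 2 * N.
Proof.
  intros Hrho Ha HaN.
  assert (Har : a * rho <= a * N) by (apply Rmult_le_compat_l; lra).
  apply Rmult_le_reg_r with (1 - a * rho); [lra|].
  unfold Rdiv; rewrite Rmult_assoc, Rinv_l by lra; nra.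
Qed.

Lemma pres_nonpos_of_small_params (a A B Gam kap rho N : R) :
  0 <= Gam -> 0 <= kap -> 0 <= B ->
  0 < rho <= N -> 0 <= a -> a * N <= 1 / 2 ->
  0 <= A -> A * Rpower (2 * N) Gam <= B / Rpower N kap ->
  pres a A B Gam kap rho <= 0.
Proof.
  intros HG Hk HB Hrho Ha HaN HA HAsmall; unfold pres.
  assert (Hcomp : Rpower (rho / (1 - a * rho)) Gam <= Rpower (2 * N) Gam).
  { apply Rle_Rpower_l; [exact HG|split].
    - apply Rdiv_lt_0_compat; nra.
    - apply compression_le_double; lra. }
  assert (Hattr : B / Rpower N kap <= B / Rpower rho kap).
  { unfold Rdiv; apply Rmult_le_compat_l; [exact HB|].
    apply Rinv_le_contravar; [apply Rpower_pos|].
    apply Rle_Rpower_l; lra. }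
  assert (A * Rpower (rho / (1 - a * rho)) Gam <= A * Rpower (2 * N) Gam)
    by (apply Rmult_le_compat_l; lra).
  lra.
Qed.

Theorem lemma3p1 (B Gam kap rl rr ul ur : R)
  (hB : 0 < B) (hG : 1 <= Gam <= 3) (hk : 0 < kap <= 1)
  (hrl : 0 < rl) (hrr : 0 < rr) (hul : 0 <= ul) (hur : 0 <= ur)
  (hdata : ur <= ul - B / Rpower rl kap) :
  forall M : R, exists delta : R, 0 < delta /\
    forall a A rs : R,
      0 < a < delta -> 0 < A < delta ->
      a < 1 / Rmax rl rr ->
      rl < rs < 1 / a ->
      ur = - pres a A B Gam kap rs + ul + pres a A B Gam kap rl ->
      M < rs.
Proof.
  intros M.
  set (N := Rmax M 1).
  assert (HN : 1 <= N) by apply Rmax_r.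
  assert (HMN : M <= N) by apply Rmax_l.
  set (Abound := B / (Rpower N kap * Rpower (2 * N) Gam)).
  assert (HK : 0 < Rpower (2 * N) Gam) by apply Rpower_pos.
  assert (HL : 0 < Rpower N kap) by apply Rpower_pos.
  exists (Rmin (1 / (2 * N)) Abound); split.
  { apply Rmin_pos; apply Rdiv_lt_0_compat; try lra; apply Rmult_lt_0_compat; lra. }
  intros a A rs Ha HA _ Hrs Heq.
  destruct (Rlt_le_dec M rs) as [Hlt|Hle]; [exact Hlt|exfalso].
  pose proof (Rmin_l (1 / (2 * N)) Abound); pose proof (Rmin_r (1 / (2 * N)) Abound).
  assert (HaN : a * N <= 1 / 2).
  { replace (1 / 2) with (1 / (2 * N) * N) by (field; lra).
    apply Rmult_le_compat_r; lra. }
  assert (HAsmall : A * Rpower (2 * N) Gam <= B / Rpower N kap).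
  { replace (B / Rpower N kap) with (Abound * Rpower (2 * N) Gam)
      by (unfold Abound; field; lra).
    apply Rmult_le_compat_r; lra. }
  pose proof (pres_pos_of_riemann_data a A B Gam kap rl rs ul ur
                ltac:(lra) hdata Heq).
  pose proof (pres_nonpos_of_small_params a A B Gam kap rs N
                ltac:(lra) ltac:(lra) ltac:(lra) ltac:(lra) ltac:(lra)
                HaN ltac:(lra) HAsmall).
  lra.
Qed.
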